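(* Let $\eta>0$, $\alpha\in(0,1)$, and run the generalized share algorithm with the mixing rule $\hat p_{j,t}=(1-\alpha)v_{j,t}+\alpha\,w_{j,t}/Z_t$ for $t\ge2$, where $w_{j,t}=\max_{s\le t}v_{j,s}$ and $Z_t=\sum_{i=1}^dw_{i,t}$. Then for all $T\ge1$, all loss vectors $\ell_1,\dots,\ell_T\in[0,1]^d$, and all $q_1,\dots,q_T\in\Delta_d$, \[ \sum_{t=1}^T\hat p_t^\top\ell_t-\sum_{t=1}^Tq_t^\top\ell_t\le\frac{n(q_1^T)\ln d}{\eta}+\frac\eta8T+\frac{m(q_1^T)}{\eta}\ln\frac T\alpha+\frac{T-m(q_1^T)-1}{\eta}\ln\frac1{1-\alpha}. \]
   Context: Let $d\ge1$ and $\Delta_d=\{q\in[0,1]^d:\sum_{i=1}^d q_i=1\}$. The generalized share algorithm with learning rate $\eta>0$ and mixing functions $\psi_t:[0,1]^{td}\to\Delta_d$ ($t\ge2$) works as follows: $\hat p_1=v_1=(1/d,\dots,1/d)$. At each round $t=1,2,\dots$ it predicts $\hat p_t=(\hat p_{1,t},\dots,\hat p_{d,t})\in\Delta_d$, observes a loss vector $\ell_t=(\ell_{1,t},\dots,\ell_{d,t})\in[0,1]^d$ (arbitrary), and suffers loss $\hat p_t^\top\ell_t$. It then forms the pre-weights $v_{j,t+1}=\hat p_{j,t}e^{-\eta\ell_{j,t}}/\sum_{i=1}^d\hat p_{i,t}e^{-\eta\ell_{i,t}}$ for $j=1,\dots,d$, sets $v_{t+1}=(v_{1,t+1},\dots,v_{d,t+1})$,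 and defines $\hat p_{t+1}=\psi_{t+1}(V_{t+1})$ where $V_{t+1}=[v_{i,s}]_{1\le i\le d,1\le s\le t+1}$ is the $d\times(t+1)$ matrix of all pre-weights so far. For $x,y\in\mathbb R_+^d$, $D_{\mathrm{TV}}(x,y)=\sum_{i:\,x_i\ge y_i}(x_i-y_i)$; for $u_1,\dots,u_T\in\mathbb R_+^d$ (with $u_t=(u_{1,t},\dots,u_{d,t})$), $m(u_1^T)=\sum_{t=2}^T D_{\mathrm{TV}}(u_t,u_{t-1})$ and $n(u_1^T)=\sum_{i=1}^d\max_{1\le t\le T}u_{i,t}$. *)

From Stdlib Require Import Reals Lra Lia.
Open Scope R_scope.

(* Experts are indexed 0..d-1; rounds are indexed 1,2,3,...
   A sequence of vectors in R^d is a function  nat (round) -> nat (expert) -> R. *)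

Fixpoint rsum (n : nat) (f : nat -> R) : R :=
  match n with
  | O => 0
  | S n' => rsum n' f + f n'
  end.

Definition tsum (T : nat) (f : nat -> R) : R := rsum T (fun k => f (S k)).

(* maxupto f n = max_{1 <= t <= n} f t  (meaningful for n >= 1) *)
Fixpoint maxupto (f : nat -> R) (n : nat) : R :=
  match n with
  | O => f 1%nat
  | S n' => Rmax (maxupto f n') (f n)
  end.

Definition DTV (d : nat) (x y : nat -> R) : R :=
  rsum d (fun i => if Rle_dec (y i) (x i) then x i - y i else 0).

Definition m_shift (d T : nat) (u : nat -> nat -> R) : R :=
  rsum (T - 1) (fun k => DTV d (u (k + 2)%nat) (u (k + 1)%nat)).

Definition n_sparse (d T : nat) (u : nat -> nat -> R) : R :=
  rsum d (fun i => maxupto (fun t => u t i) T).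

Definition in_simplex (d : nat) (q : nat -> R) : Prop :=
  (forall i, (i < d)%nat -> 0 <= q i <= 1) /\ rsum d q = 1.

(* State of the generalized share algorithm with the mixing rule
   p_t = (1-alpha) v_t + alpha w_t / Z_t  (t >= 2),
   where w_t = max_{s <= t} v_s (componentwise) and Z_t = sum_i w_{i,t}.
   share_state ... t = (v_t, w_t, p_t) for t >= 1 (t = 0 is a dummy copy of t = 1). *)
Fixpoint share_state (d : nat) (eta alpha : R) (l : nat -> nat -> R) (t : nat)
  : (nat -> R) * (nat -> R) * (nat -> R) :=
  let unif := fun _ : nat => 1 / INR d in
  match t with
  | O => (unif, unif, unif)
  | S t' =>
    match t' with
    | O => (unif, unif, unif)
    | S _ =>
      let '(_, w', p') := share_state d eta alpha l t' in
      let Zv := rsum d (fun k => p' k * exp (- eta * l t' k)) in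
      let v := fun j => p' j * exp (- eta * l t' j) / Zv in
      let w := fun j => Rmax (w' j) (v j) in
      let Z := rsum d w in
      let p := fun j => (1 - alpha) * v j + alpha * w j / Z in
      (v, w, p)
    end
  end.

Definition share_pred (d : nat) (eta alpha : R) (l : nat -> nat -> R) (t : nat) : nat -> R :=
  snd (share_state d eta alpha l t).

From Coquelicot Require Import Coquelicot.
From Stdlib Require Import Reals Lra Lia.
Open Scope R_scope.

(** Write [p_t] for the predictions and fix a comparator sequence [q_1 .. q_T].
    (1) Hoeffding's lemma turns each round into
          [p_t.l_t - q_t.l_t <= (1/eta) sum_i q_{i,t} ln (v_{i,t+1} / p_{i,t}) + eta/8].
    (2) The mixing rule gives [p_{i,t} >= (1-alpha) v_{i,t}] and, since [Z_t <= t <= T],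
        [p_{i,t} >= alpha w_{i,t} / T]; moreover [w_{i,t}] dominates [v_{i,t}], [w_{i,t-1}]
        and [1/d].
    (3) For each expert [i], a potential argument (induction on [t]) bounds
        [sum_t q_{i,t} ln (v_{i,t+1} / p_{i,t})] by [max_t q_{i,t} ln d] plus, for each
        [t >= 2], [c ln (T/alpha) + (q_{i,t} - c) ln (1/(1-alpha))] with
        [c = (q_{i,t} - q_{i,t-1})^+].
    (4) Summed over experts, the [c] add up to [m(q)] and each [q_t] has mass 1, which
        together with (1) is the theorem. *)

Lemma rsum_ext n f g : (forall i, (i < n)%nat -> f i = g i) -> rsum n f = rsum n g.
Proof.
  induction n as [|n IH]; intros H; simpl; [reflexivity|].
  rewrite IH, H by (try intros; try apply H; lia); reflexivity.
Qed.

Lemma rsum_le n f g : (forall i, (i < n)%nat -> f i <= g i) -> rsum n f <= rsum n g.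
Proof.
  induction n as [|n IH]; intros H; simpl; [lra|].
  pose proof (IH (fun i Hi => H i ltac:(lia))). pose proof (H n ltac:(lia)). lra.
Qed.

Lemma rsum_plus n f g : rsum n (fun i => f i + g i) = rsum n f + rsum n g.
Proof. induction n as [|n IH]; simpl; [lra|]. rewrite IH. ring. Qed.

Lemma rsum_minus n f g : rsum n (fun i => f i - g i) = rsum n f - rsum n g.
Proof. induction n as [|n IH]; simpl; [lra|]. rewrite IH. ring. Qed.

Lemma rsum_scal n c f : rsum n (fun i => c * f i) = c * rsum n f.
Proof. induction n as [|n IH]; simpl; [lra|]. rewrite IH. ring. Qed.

Lemma rsum_div n f c : rsum n (fun i => f i / c) = rsum n f / c.
Proof.
  unfold Rdiv. rewrite Rmult_comm, <- rsum_scal. apply rsum_ext. intros; ring.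
Qed.

Lemma rsum_const n c : rsum n (fun _ => c) = INR n * c.
Proof. induction n as [|n IH]; [simpl; lra|]. cbn [rsum]. rewrite IH, S_INR. ring. Qed.

Lemma rsum_swap n m (f : nat -> nat -> R) :
  rsum n (fun i => rsum m (fun k => f i k)) = rsum m (fun k => rsum n (fun i => f i k)).
Proof.
  induction n as [|n IH]; simpl.
  - rewrite rsum_const. ring.
  - rewrite IH, <- rsum_plus. reflexivity.
Qed.

Lemma rsum_nonneg n f : (forall i, (i < n)%nat -> 0 <= f i) -> 0 <= rsum n f.
Proof.
  intros H. replace 0 with (rsum n (fun _ => 0)) by (rewrite rsum_const; ring).
  apply rsum_le. exact H.
Qed.

Lemma rsum_pos n f : (0 < n)%nat -> (forall i, (i < n)%nat -> 0 < f i) -> 0 < rsum n f.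
Proof.
  destruct n as [|n]; [lia|]. intros _ H. simpl.
  pose proof (rsum_nonneg n f (fun i Hi => Rlt_le _ _ (H i ltac:(lia)))).
  pose proof (H n ltac:(lia)). lra.
Qed.

Lemma rsum_term_le n f j :
  (forall i, (i < n)%nat -> 0 <= f i) -> (j < n)%nat -> f j <= rsum n f.
Proof.
  induction n as [|n IH]; intros H Hj; [lia|]. simpl.
  pose proof (H n ltac:(lia)).
  destruct (Nat.eq_dec j n) as [->|Hne].
  - pose proof (rsum_nonneg n f (fun i Hi => H i ltac:(lia))). lra.
  - pose proof (IH (fun i Hi => H i ltac:(lia)) ltac:(lia)). lra.
Qed.

(** * Hoeffding's lemma *)

Lemma nonincreasing_of_derive f df a b : a <= b ->
  (forall x, a <= x <= b -> is_derive f x (df x)) ->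
  (forall x, a <= x <= b -> df x <= 0) -> f b <= f a.
Proof.
  intros Hab Hd Hneg.
  destruct (Req_dec a b) as [->|Hne]; [lra|].
  destruct (MVT_gen f a b df) as [c [Hc Heq]];
    rewrite ?Rmin_left, ?Rmax_right in * by lra.
  - intros x Hx. apply Hd. lra.
  - intros x Hx. apply derivable_continuous_pt.
    exists (df x). apply is_derive_Reals, Hd. lra.
  - assert (df c * (b - a) <= 0) by (apply Rmult_le_0_r; [apply Hneg|]; lra). lra.
Qed.

(** Convexity of [exp]: on [0, 1], [x |-> exp (- eta * x)] lies below its chord.
    Both endpoints lie above the tangent line at [- eta * x]. *)
Lemma exp_below_chord eta x : 0 <= x <= 1 ->
  exp (- eta * x) <= 1 - x + x * exp (- eta).
Proof.
  intros Hx. set (z := - eta * x).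
  assert (tangent : forall y, exp z * (1 + (y - z)) <= exp y).
  { intros y. replace (exp y) with (exp z * exp (y - z)) by (rewrite <- exp_plus; f_equal; ring).
    apply Rmult_le_compat_l; [left; apply exp_pos | apply exp_ineq1_le]. }
  pose proof (tangent 0) as T0. pose proof (tangent (- eta)) as T1. rewrite exp_0 in T0.
  assert (E : (1 - x) * (exp z * (1 + (0 - z))) + x * (exp z * (1 + (- eta - z))) = exp z)
    by (unfold z; ring).
  apply Rmult_le_compat_l with (r := 1 - x) in T0; [|lra].
  apply Rmult_le_compat_l with (r := x) in T1; [|lra].
  fold z. lra.
Qed.

Lemma prod_le_quarter_sq_sum a b : 0 < a + b -> a * b / (a + b) ^ 2 <= 1 / 4.
Proof.
  intros Hab. assert (0 < (a + b) ^ 2) by (apply pow_lt; lra).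
  assert (a * b <= (a + b) ^ 2 / 4) by (pose proof (pow2_ge_0 (a - b)); nra).
  unfold Rdiv in *. apply (Rmult_le_reg_r ((a + b) ^ 2)); [lra|].
  rewrite Rmult_assoc, Rinv_l by lra. lra.
Qed.

(** Hoeffding's lemma for a Bernoulli variable [X] of mean [mu]:
    [ln E[exp(- s X)] + s mu <= s^2/8] for [s >= 0]. The proof differentiates twice. *)
Lemma bernoulli_cgf_bound mu s : 0 <= mu <= 1 -> 0 <= s ->
  ln (1 - mu + mu * exp (- s)) + s * mu <= s ^ 2 / 8.
Proof.
  intros Hmu Hs.
  assert (Hden : forall x, 0 < 1 - mu + mu * exp (- x)).
  { intros x. pose proof (exp_pos (- x)). nra. }
  (* g is the derivative of f below; its own derivative is
     theta (1 - theta) - 1/4 <= 0 with theta = mu e^{-x} / (1 - mu + mu e^{-x}). *)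
  set (g := fun x => mu - mu * exp (- x) / (1 - mu + mu * exp (- x)) - x / 4).
  assert (Hg : forall x, 0 <= x -> g x <= 0).
  { intros x Hx.
    assert (g x <= g 0).
    { apply (nonincreasing_of_derive g
               (fun y => mu * (1 - mu) * exp (- y) / (1 - mu + mu * exp (- y)) ^ 2 - 1/4));
      [lra| |].
      - intros y _. unfold g. pose proof (Hden y). auto_derive; [lra | field; lra].
      - intros y _. pose proof (Hden y).
        pose proof (prod_le_quarter_sq_sum (1 - mu) (mu * exp (- y)) (Hden y)).
        replace (mu * (1 - mu) * exp (- y)) with ((1 - mu) * (mu * exp (- y))) by ring. lra. }
    assert (g 0 = 0) by (unfold g; rewrite Ropp_0, exp_0; field; lra). lra. }
  set (f := fun x => ln (1 - mu + mu * exp (- x)) + x * mu - x ^ 2 / 8).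
  assert (f s <= f 0).
  { apply (nonincreasing_of_derive f g); [lra| |].
    - intros y _. unfold f, g. pose proof (Hden y). auto_derive; [lra | field; lra].
    - intros y Hy. apply Hg. lra. }
  assert (f 0 = 0).
  { unfold f; cbv beta. rewrite Ropp_0, exp_0. replace (1 - mu + mu * 1) with 1 by ring.
    rewrite ln_1. field. }
  unfold f in *. lra.
Qed.

(** Hoeffding's lemma for a loss vector [l] in [[0,1]^d] under the distribution [p]:
    [ln E_p[exp(- eta l)] <= - eta E_p[l] + eta^2/8]. Reduces to the Bernoulli case by
    convexity of [exp]. *)
Lemma hoeffding_lemma d (p l : nat -> R) eta : 0 <= eta ->
  (forall i, (i < d)%nat -> 0 < p i) -> rsum d p = 1 ->
  (forall i, (i < d)%nat -> 0 <= l i <= 1) ->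
  ln (rsum d (fun i => p i * exp (- eta * l i)))
  <= - eta * rsum d (fun i => p i * l i) + eta ^ 2 / 8.
Proof.
  intros He Hp Hs Hl.
  assert (Hd : (0 < d)%nat) by (destruct d; [simpl in Hs; lra | lia]).
  set (mu := rsum d (fun i => p i * l i)).
  assert (Hmu : 0 <= mu <= 1).
  { split.
    - apply rsum_nonneg. intros i Hi. pose proof (Hp i Hi); pose proof (Hl i Hi). nra.
    - rewrite <- Hs. apply rsum_le. intros i Hi. pose proof (Hp i Hi); pose proof (Hl i Hi). nra. }
  assert (Hchord : rsum d (fun i => p i * exp (- eta * l i)) <= 1 - mu + mu * exp (- eta)).
  { replace (1 - mu + mu * exp (- eta))
      with (rsum d (fun i => p i - p i * l i + exp (- eta) * (p i * l i)))
      by (rewrite rsum_plus, rsum_minus, rsum_scal, Hs; fold mu; ring).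
    apply rsum_le. intros i Hi. pose proof (exp_below_chord eta (l i) (Hl i Hi)).
    pose proof (Hp i Hi). nra. }
  assert (Hpos : 0 < rsum d (fun i => p i * exp (- eta * l i))).
  { apply rsum_pos; [exact Hd|]. intros i Hi.
    pose proof (Hp i Hi). pose proof (exp_pos (- eta * l i)). nra. }
  pose proof (bernoulli_cgf_bound mu eta Hmu He).
  pose proof (ln_le _ _ Hpos Hchord). lra.
Qed.

Lemma exp_weights_round d eta (p l q v : nat -> R) : 0 < eta ->
  (forall i, (i < d)%nat -> 0 < p i) -> rsum d p = 1 ->
  (forall i, (i < d)%nat -> 0 <= l i <= 1) -> rsum d q = 1 ->
  (forall i, (i < d)%nat ->
     v i = p i * exp (- eta * l i) / rsum d (fun k => p k * exp (- eta * l k))) ->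
  rsum d (fun i => p i * l i) - rsum d (fun i => q i * l i)
  <= / eta * rsum d (fun i => q i * (ln (v i) - ln (p i))) + eta / 8.
Proof.
  intros He Hp Hps Hl Hq Hv.
  set (Z := rsum d (fun k => p k * exp (- eta * l k))).
  pose proof (hoeffding_lemma d p l eta (Rlt_le _ _ He) Hp Hps Hl) as Hh. fold Z in Hh.
  assert (HZ : 0 < Z).
  { apply rsum_pos; [destruct d; [simpl in Hps; lra | lia]|].
    intros i Hi. pose proof (Hp i Hi). pose proof (exp_pos (- eta * l i)). nra. }
  (* ln (v_i / p_i) = - eta l_i - ln Z *)
  rewrite (rsum_ext d (fun i => q i * (ln (v i) - ln (p i)))
                    (fun i => - eta * (q i * l i) + (- ln Z) * q i)).
  2:{ intros i Hi. cbv beta. rewrite Hv by exact Hi. fold Z. pose proof (Hp i Hi).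
      rewrite ln_div, ln_mult, ln_exp by (try apply Rmult_lt_0_compat; auto using exp_pos).
      ring. }
  rewrite rsum_plus, !rsum_scal, Hq.
  assert (eta * rsum d (fun i => p i * l i) <= - ln Z + eta ^ 2 / 8) by lra.
  apply (Rmult_le_reg_l eta); [exact He|].
  rewrite Rmult_plus_distr_l, <- Rmult_assoc, Rinv_r by lra.
  rewrite Rmult_minus_distr_l. simpl in *. lra.
Qed.

Lemma exp_weights_simplex d eta (p l v : nat -> R) :
  (forall i, (i < d)%nat -> 0 < p i) -> rsum d p = 1 ->
  (forall i, (i < d)%nat ->
     v i = p i * exp (- eta * l i) / rsum d (fun k => p k * exp (- eta * l k))) ->
  (forall i, (i < d)%nat -> 0 < v i) /\ rsum d v = 1.
Proof.
  intros Hp Hps Hv.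
  set (Z := rsum d (fun k => p k * exp (- eta * l k))) in Hv.
  assert (HZ : 0 < Z).
  { apply rsum_pos; [destruct d; [simpl in Hps; lra | lia]|].
    intros i Hi. pose proof (Hp i Hi). pose proof (exp_pos (- eta * l i)). nra. }
  split.
  - intros i Hi. rewrite Hv by exact Hi. pose proof (Hp i Hi).
    pose proof (exp_pos (- eta * l i)). apply Rdiv_lt_0_compat; nra.
  - rewrite (rsum_ext d v (fun i => p i * exp (- eta * l i) / Z)) by exact Hv.
    rewrite rsum_div. fold Z. field. lra.
Qed.

Lemma mixture_simplex d alpha (v w p : nat -> R) : 0 < alpha < 1 ->
  (forall i, (i < d)%nat -> 0 < v i) -> rsum d v = 1 ->
  (forall i, (i < d)%nat -> 0 < w i) ->
  (forall i, (i < d)%nat -> p i = (1 - alpha) * v i + alpha * w i / rsum d w) ->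
  (forall i, (i < d)%nat -> 0 < p i) /\ rsum d p = 1.
Proof.
  intros Ha Hv Hvs Hw Hp.
  assert (HZ : 0 < rsum d w)
    by (apply rsum_pos; [destruct d; [simpl in Hvs; lra | lia] | exact Hw]).
  split.
  - intros i Hi. rewrite Hp by exact Hi. pose proof (Hv i Hi). pose proof (Hw i Hi).
    assert (0 < alpha * w i / rsum d w) by (apply Rdiv_lt_0_compat; nra). nra.
  - rewrite (rsum_ext d p _ Hp), rsum_plus, rsum_scal, rsum_div, rsum_scal, Hvs.
    field. lra.
Qed.

Lemma mixture_log_bounds alpha T v w Z : 0 < alpha < 1 ->
  0 < v -> 0 < w -> 0 < Z <= T ->
  - ln ((1 - alpha) * v + alpha * w / Z) <= ln (1 / (1 - alpha)) - ln v /\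
  - ln ((1 - alpha) * v + alpha * w / Z) <= ln (T / alpha) - ln w.
Proof.
  intros Ha Hv Hw HZ.
  assert (Hmix : 0 < alpha * w / Z) by (apply Rdiv_lt_0_compat; nra).
  assert (HwT : alpha * w / T <= alpha * w / Z).
  { unfold Rdiv. apply Rmult_le_compat_l; [nra|]. apply Rinv_le_contravar; lra. }
  split.
  - assert (ln ((1 - alpha) * v) <= ln ((1 - alpha) * v + alpha * w / Z))
      by (apply ln_le; nra).
    rewrite ln_mult in H by lra. rewrite ln_div by lra. rewrite ln_1. lra.
  - assert (ln (alpha * w / T) <= ln ((1 - alpha) * v + alpha * w / Z))
      by (apply ln_le; [apply Rdiv_lt_0_compat; nra | nra]).
    rewrite ln_div, ln_mult in H by nra. rewrite ln_div by lra. lra.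
Qed.

(** * The share algorithm with past-maximum mixing *)

Definition share_v d eta alpha l t : nat -> R := fst (fst (share_state d eta alpha l t)).
Definition share_w d eta alpha l t : nat -> R := snd (fst (share_state d eta alpha l t)).

Section Recursion.
Variables (d : nat) (eta alpha : R) (l : nat -> nat -> R).

Local Notation v := (share_v d eta alpha l).
Local Notation w := (share_w d eta alpha l).
Local Notation p := (share_pred d eta alpha l).

Lemma share_state_succ t : (1 <= t)%nat ->
  share_state d eta alpha l (S t) =
  (let v' := fun j => p t j * exp (- eta * l t j)
                      / rsum d (fun k => p t k * exp (- eta * l t k)) in
   let w' := fun j => Rmax (w t j) (v' j) in
   (v', w', fun j => (1 - alpha) * v' j + alpha * w' j / rsum d w')).
Proof.
  intros Ht. destruct t as [|t]; [lia|]. unfold share_pred, share_w.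
  change (share_state d eta alpha l (S (S t))) with
    (let '(_, w', p') := share_state d eta alpha l (S t) in
     let Zv := rsum d (fun k => p' k * exp (- eta * l (S t) k)) in
     let v := fun j => p' j * exp (- eta * l (S t) j) / Zv in
     let w := fun j => Rmax (w' j) (v j) in
     (v, w, fun j => (1 - alpha) * v j + alpha * w j / rsum d w)).
  destruct (share_state d eta alpha l (S t)) as [[? ?] ?]. reflexivity.
Qed.

Lemma share_v_succ t j : (1 <= t)%nat ->
  v (S t) j = p t j * exp (- eta * l t j) / rsum d (fun k => p t k * exp (- eta * l t k)).
Proof. intros Ht. unfold share_v. rewrite share_state_succ by exact Ht. reflexivity. Qed.

Lemma share_w_succ t j : (1 <= t)%nat -> w (S t) j = Rmax (w t j) (v (S t) j).
Proof.
  intros Ht. rewrite share_v_succ by exact Ht.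
  unfold share_w at 1. rewrite share_state_succ by exact Ht. reflexivity.
Qed.

Lemma share_pred_succ t j : (1 <= t)%nat ->
  p (S t) j = (1 - alpha) * v (S t) j + alpha * w (S t) j / rsum d (w (S t)).
Proof.
  intros Ht. unfold share_pred at 1, share_v, share_w.
  rewrite share_state_succ by exact Ht. reflexivity.
Qed.

Lemma share_state_one :
  share_state d eta alpha l 1 = (fun _ => 1 / INR d, fun _ => 1 / INR d, fun _ => 1 / INR d).
Proof. reflexivity. Qed.

(** Invariants of the algorithm at a round [t >= 1]: [p_t] and [v_t] are positive
    probability vectors, [v_t <= w_t], [w_t] lies in [[1/d, 1]] and [sum w_t <= t]
    (each round adds at most the mass 1 of [v_t] to [sum w]). *)
Record share_invariant (t : nat) : Prop := {
  pred_pos : forall i, (i < d)%nat -> 0 < p t i;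
  pred_sum : rsum d (p t) = 1;
  v_pos : forall i, (i < d)%nat -> 0 < v t i;
  v_sum : rsum d (v t) = 1;
  w_range : forall i, (i < d)%nat -> 1 / INR d <= w t i <= 1;
  v_le_w : forall i, (i < d)%nat -> v t i <= w t i;
  w_sum_le : rsum d (w t) <= INR t
}.

Hypothesis Hd : (1 <= d)%nat.
Hypothesis Halpha : 0 < alpha < 1.

Lemma share_invariant_holds t : (1 <= t)%nat -> share_invariant t.
Proof.
  intros Ht. assert (HdR : 1 <= INR d) by (apply (le_INR 1); exact Hd).
  assert (Hunif : 0 < 1 / INR d <= 1).
  { split; [apply Rdiv_lt_0_compat; lra|].
    unfold Rdiv. rewrite Rmult_1_l. rewrite <- Rinv_1. apply Rinv_le_contravar; lra. }
  induction t as [|t IH]; [lia|].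
  destruct (Nat.eq_dec t 0) as [->|Ht0].
  - assert (E : rsum d (fun _ => 1 / INR d) = 1) by (rewrite rsum_const; field; lra).
    split; intros; unfold share_pred, share_v, share_w; rewrite share_state_one;
      cbn [fst snd INR]; rewrite ?E; lra.
  - destruct (IH ltac:(lia)) as [HP HPs _ _ HW _ _]. assert (Ht1 : (1 <= t)%nat) by lia.
    destruct (exp_weights_simplex d eta (p t) (l t) (v (S t)) HP HPs
                (fun j _ => share_v_succ t j Ht1)) as [HV HVs].
    assert (HV1 : forall i, (i < d)%nat -> v (S t) i <= 1).
    { intros i Hi. rewrite <- HVs. apply rsum_term_le; [|exact Hi]. intros; left; auto. }
    assert (HW' : forall i, (i < d)%nat -> 1 / INR d <= w (S t) i <= 1).
    { intros i Hi. rewrite share_w_succ by exact Ht1. pose proof (HW i Hi). pose proof (HV1 i Hi).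
      split; [eapply Rle_trans; [|apply Rmax_l]; lra | apply Rmax_lub; lra]. }
    destruct (mixture_simplex d alpha (v (S t)) (w (S t)) (p (S t)) Halpha HV HVs
                (fun i Hi => Rlt_le_trans _ _ _ (proj1 Hunif) (proj1 (HW' i Hi)))
                (fun j _ => share_pred_succ t j Ht1)) as [HP' HPs'].
    split; auto.
    + intros i Hi. rewrite share_w_succ by exact Ht1. apply Rmax_r.
    + rewrite S_INR. apply Rle_trans with (rsum d (fun j => w t j + v (S t) j)).
      * apply rsum_le. intros i Hi. rewrite share_w_succ by exact Ht1.
        pose proof (HW i Hi). pose proof (HV i Hi). apply Rmax_lub; lra.
      * destruct (IH ltac:(lia)) as [_ _ _ _ _ _ HZ]. rewrite rsum_plus, HVs. lra.
Qed.

End Recursion.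

Lemma share_regret_le_log_ratios d eta alpha l q T :
  (1 <= d)%nat -> 0 < eta -> 0 < alpha < 1 ->
  (forall t i, (1 <= t <= T)%nat -> (i < d)%nat -> 0 <= l t i <= 1) ->
  (forall t, (1 <= t <= T)%nat -> in_simplex d (q t)) ->
  tsum T (fun t => rsum d (fun i => share_pred d eta alpha l t i * l t i))
  - tsum T (fun t => rsum d (fun i => q t i * l t i))
  <= / eta * tsum T (fun t => rsum d (fun i =>
         q t i * (ln (share_v d eta alpha l (S t) i) - ln (share_pred d eta alpha l t i))))
     + eta / 8 * INR T.
Proof.
  intros Hd He Ha Hl Hq. unfold tsum.
  rewrite <- rsum_minus, <- rsum_scal, Rmult_comm, <- rsum_const, <- rsum_plus.
  apply rsum_le. intros k Hk.
  destruct (share_invariant_holds d eta alpha l Hd Ha (S k) ltac:(lia)) as [HP HPs _ _ _ _ _].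
  apply exp_weights_round; auto.
  - intros i Hi. apply Hl; [lia | exact Hi].
  - apply Hq. lia.
  - intros i _. apply share_v_succ. lia.
Qed.

(** * Steps (2)-(3): the per-expert potential argument *)

Lemma maxupto_ge_last f n : (1 <= n)%nat -> f n <= maxupto f n.
Proof. intros Hn. destruct n as [|n]; [lia | apply Rmax_r]. Qed.

Lemma neg_ln_antimono x y : 0 < x <= y -> - ln y <= - ln x.
Proof. intros H. pose proof (ln_le x y (proj1 H) (proj2 H)). lra. Qed.

(** Upward move [(q_{i,k+2} - q_{i,k+1})^+] of expert [i]'s comparator weight; summed
    over [i] it is the total-variation term of [m_shift]. *)
Definition shift_up (q : nat -> nat -> R) (i k : nat) : R :=
  if Rle_dec (q (k + 1)%nat i) (q (k + 2)%nat i) then q (k + 2)%nat i - q (k + 1)%nat i else 0.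

Lemma shift_up_bounds q i k : 0 <= q (k + 1)%nat i -> 0 <= q (k + 2)%nat i ->
  0 <= shift_up q i k /\ 0 <= q (k + 2)%nat i - shift_up q i k <= q (k + 1)%nat i.
Proof. intros. unfold shift_up. destruct Rle_dec; lra. Qed.

(** Cost charged to expert [i] at round [k + 2]: the upward move pays [kap = ln (T/alpha)],
    the rest of the weight pays [lam = ln (1/(1-alpha))]. *)
Definition switch_cost (lam kap : R) (q : nat -> nat -> R) (i k : nat) : R :=
  (q (k + 2)%nat i - shift_up q i k) * lam + shift_up q i k * kap.

(** The inductive step of the potential argument, as an inequality between reals.
    [Lv], [Lw], [Lw'], [Lp] stand for [- ln] of [v_s], [w_{s-1}], [w_s], [p_s]; [a], [a']
    for the comparator weights at [s-1], [s]; [M], [M'] for their running maxima. *)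
Lemma potential_step D lam kap a a' c M M' Lv Lw Lw' Lp :
  0 <= c -> 0 <= a' - c <= a -> a <= M -> M <= M' -> a' <= M' ->
  Lp <= lam + Lv -> Lp <= kap + Lw' ->
  Lw' <= Lv -> Lw' <= Lw -> Lw' <= D ->
  M * D - (M - a) * Lw - a * Lv + a' * Lp
  <= M' * D - (M' - a') * Lw' + ((a' - c) * lam + c * kap).
Proof.
  intros Hc Hac HaM HM Ha'M Hlam Hkap HLv HLw HD.
  assert ((a' - c) * Lp <= (a' - c) * (lam + Lv)) by (apply Rmult_le_compat_l; lra).
  assert (c * Lp <= c * (kap + Lw')) by (apply Rmult_le_compat_l; lra).
  assert (0 <= (a - (a' - c)) * (Lv - Lw')) by (apply Rmult_le_pos; lra).
  assert (0 <= (M - a) * (Lw - Lw')) by (apply Rmult_le_pos; lra).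
  assert (0 <= (M' - M) * (D - Lw')) by (apply Rmult_le_pos; lra).
  nra.
Qed.

Section ExpertPotential.
Variables (d : nat) (eta alpha : R) (l q : nat -> nat -> R) (T i : nat).
Hypothesis Hd : (1 <= d)%nat.
Hypothesis Halpha : 0 < alpha < 1.
Hypothesis Hi : (i < d)%nat.
Hypothesis Hq : forall t, (1 <= t <= T)%nat -> 0 <= q t i.

Local Notation v t := (share_v d eta alpha l t i).
Local Notation w t := (share_w d eta alpha l t i).
Local Notation p t := (share_pred d eta alpha l t i).
Local Notation M t := (maxupto (fun s => q s i) t).
Local Notation cost := (switch_cost (ln (1 / (1 - alpha))) (ln (INR T / alpha)) q i).

Lemma share_log_bounds t : (1 <= t)%nat -> (S t <= T)%nat ->
  - ln (p (S t)) <= ln (1 / (1 - alpha)) - ln (v (S t)) /\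
  - ln (p (S t)) <= ln (INR T / alpha) - ln (w (S t)) /\
  - ln (w (S t)) <= - ln (v (S t)) /\
  - ln (w (S t)) <= - ln (w t) /\
  - ln (w (S t)) <= ln (INR d).
Proof.
  intros Ht HtT. assert (HdR : 0 < INR d) by (apply lt_0_INR; lia).
  assert (Hunif : 0 < 1 / INR d) by (apply Rdiv_lt_0_compat; lra).
  destruct (share_invariant_holds d eta alpha l Hd Halpha t Ht) as [_ _ _ _ Hwt _ _].
  destruct (share_invariant_holds d eta alpha l Hd Halpha (S t) ltac:(lia))
    as [_ _ Hvs _ Hws Hvws Hsum].
  pose proof (Hwt i Hi). pose proof (Hws i Hi). pose proof (Hvs i Hi). pose proof (Hvws i Hi).
  assert (HZ : 0 < rsum d (share_w d eta alpha l (S t)) <= INR T).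
  { split; [apply rsum_pos; [lia|]; intros j Hj; pose proof (Hws j Hj); lra|].
    apply Rle_trans with (INR (S t)); [exact Hsum | apply le_INR; lia]. }
  destruct (mixture_log_bounds alpha (INR T) (v (S t)) (w (S t)) _ Halpha
              ltac:(lra) ltac:(lra) HZ) as [Hlam Hkap].
  rewrite <- share_pred_succ in Hlam, Hkap by exact Ht.
  assert (Hwts : w t <= w (S t)) by (rewrite share_w_succ by exact Ht; apply Rmax_l).
  assert (HD : - ln (w (S t)) <= ln (INR d)).
  { pose proof (neg_ln_antimono (1 / INR d) (w (S t)) ltac:(lra)) as Hw.
    unfold Rdiv in Hw. rewrite Rmult_1_l, ln_Rinv in Hw by exact HdR. lra. }
  repeat split; try apply neg_ln_antimono; lra.
Qed.

(** Step (3), potential invariant: after [t = t' + 1] rounds, the accumulated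
    log-ratios of expert [i] are bounded by [M_t ln d + sum of costs], minus two
    nonnegative slack terms that feed the next step. *)
Lemma expert_potential t' : (S t' <= T)%nat ->
  rsum (S t') (fun k => q (S k) i * (ln (v (S (S k))) - ln (p (S k))))
  <= M (S t') * ln (INR d) - (M (S t') - q (S t') i) * (- ln (w (S t')))
     - q (S t') i * (- ln (v (S (S t')))) + rsum t' cost.
Proof.
  induction t' as [|t' IH]; intros HT.
  - assert (HdR : 0 < INR d) by (apply lt_0_INR; lia).
    cbn [rsum maxupto]. unfold share_pred at 1. rewrite share_state_one. cbn [snd].
    rewrite Rmax_left by lra. unfold Rdiv. rewrite Rmult_1_l, ln_Rinv by exact HdR.
    apply Req_le. ring.
  - specialize (IH ltac:(lia)). cbn [rsum] in *.
    destruct (share_log_bounds (S t') ltac:(lia) HT) as (Hlam & Hkap & Hvw & Hww & HD).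
    pose proof (shift_up_bounds q i t') as Hshift.
    replace (t' + 1)%nat with (S t') in Hshift by lia.
    replace (t' + 2)%nat with (S (S t')) in Hshift by lia.
    specialize (Hshift (Hq (S t') ltac:(lia)) (Hq (S (S t')) ltac:(lia))).
    pose proof (potential_step (ln (INR d)) (ln (1 / (1 - alpha))) (ln (INR T / alpha))
      (q (S t') i) (q (S (S t')) i) (shift_up q i t') (M (S t')) (M (S (S t')))
      (- ln (v (S (S t')))) (- ln (w (S t'))) (- ln (w (S (S t')))) (- ln (p (S (S t')))))
      as Hstep.
    specialize (Hstep ltac:(lra) ltac:(lra) (maxupto_ge_last (fun s => q s i) (S t') ltac:(lia))
                  (Rmax_l _ _) (Rmax_r _ _) Hlam Hkap Hvw Hww HD).
    set (past_cost := rsum t' cost) in *.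
    unfold switch_cost. replace (t' + 2)%nat with (S (S t')) by lia.
    lra.
Qed.

(** Dropping the slack terms (nonnegative since [v, w <= 1]) gives the per-expert bound. *)
Lemma expert_log_ratio_bound : (1 <= T)%nat ->
  rsum T (fun k => q (S k) i * (ln (v (S (S k))) - ln (p (S k))))
  <= M T * ln (INR d) + rsum (T - 1) cost.
Proof.
  intros HT.
  pose proof (expert_potential (T - 1) ltac:(lia)) as Hpot.
  replace (S (T - 1)) with T in Hpot by lia.
  destruct (share_invariant_holds d eta alpha l Hd Halpha T HT) as [_ _ _ _ Hw _ _].
  destruct (share_invariant_holds d eta alpha l Hd Halpha (S T) ltac:(lia))
    as [_ _ Hv Hvs _ _ _].
  assert (Hv1 : v (S T) <= 1).
  { rewrite <- Hvs. apply rsum_term_le; [|exact Hi]. intros j Hj. left. apply Hv, Hj. }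
  pose proof (Hv i Hi). pose proof (Hw i Hi).
  assert (HdR : 0 < 1 / INR d) by (apply Rdiv_lt_0_compat; [lra | apply lt_0_INR; lia]).
  pose proof (neg_ln_antimono (w T) 1 ltac:(lra)) as Hlw.
  pose proof (neg_ln_antimono (v (S T)) 1 ltac:(lra)) as Hlv.
  rewrite ln_1, Ropp_0 in Hlw, Hlv.
  pose proof (maxupto_ge_last (fun s => q s i) T HT) as HaM.
  pose proof (Hq T ltac:(lia)).
  assert (0 <= (M T - q T i) * - ln (w T)) by (apply Rmult_le_pos; lra).
  assert (0 <= q T i * - ln (v (S T))) by (apply Rmult_le_pos; lra).
  lra.
Qed.

End ExpertPotential.

Lemma switch_cost_total d T (q : nat -> nat -> R) lam kap :
  (forall t, (1 <= t <= T)%nat -> rsum d (q t) = 1) ->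
  rsum d (fun i => rsum (T - 1) (switch_cost lam kap q i))
  = (INR (T - 1) - m_shift d T q) * lam + m_shift d T q * kap.
Proof.
  intros Hq. unfold m_shift. rewrite rsum_swap.
  rewrite (rsum_ext (T - 1) _ (fun k =>
     lam * 1 - lam * DTV d (q (k + 2)%nat) (q (k + 1)%nat)
     + kap * DTV d (q (k + 2)%nat) (q (k + 1)%nat))).
  - rewrite rsum_plus, rsum_minus, !rsum_scal, rsum_const. ring.
  - intros k Hk. unfold switch_cost.
    rewrite (rsum_ext d _ (fun i => lam * q (k + 2)%nat i - lam * shift_up q i k
                                     + kap * shift_up q i k)) by (intros; ring).
    rewrite rsum_plus, rsum_minus, !rsum_scal, Hq by lia. reflexivity.
Qed.

Lemma log_ratio_total_bound d eta alpha l q T :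
  (1 <= d)%nat -> 0 < alpha < 1 -> (1 <= T)%nat ->
  (forall t, (1 <= t <= T)%nat -> in_simplex d (q t)) ->
  tsum T (fun t => rsum d (fun i =>
      q t i * (ln (share_v d eta alpha l (S t) i) - ln (share_pred d eta alpha l t i))))
  <= n_sparse d T q * ln (INR d)
     + ((INR (T - 1) - m_shift d T q) * ln (1 / (1 - alpha))
        + m_shift d T q * ln (INR T / alpha)).
Proof.
  intros Hd Ha HT Hq. unfold tsum. rewrite rsum_swap.
  rewrite <- switch_cost_total by (intros t Ht; apply (Hq t Ht)).
  unfold n_sparse. rewrite Rmult_comm, <- rsum_scal, <- rsum_plus.
  apply rsum_le. intros i Hi. rewrite Rmult_comm.
  apply expert_log_ratio_bound; auto.
  intros t Ht. apply (proj1 (Hq t Ht)), Hi.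
Qed.

Theorem mainTheorem10 (d : nat) (eta alpha : R) (T : nat)
  (l q : nat -> nat -> R)
  (Hd : (1 <= d)%nat) (Heta : 0 < eta) (Halpha : 0 < alpha < 1) (HT : (1 <= T)%nat)
  (Hl : forall t i, (1 <= t <= T)%nat -> (i < d)%nat -> 0 <= l t i <= 1)
  (Hq : forall t, (1 <= t <= T)%nat -> in_simplex d (q t)) :
  tsum T (fun t => rsum d (fun i => share_pred d eta alpha l t i * l t i))
  - tsum T (fun t => rsum d (fun i => q t i * l t i))
  <= n_sparse d T q * ln (INR d) / eta + eta / 8 * INR T
     + m_shift d T q / eta * ln (INR T / alpha)
     + (INR T - m_shift d T q - 1) / eta * ln (1 / (1 - alpha)).
Proof.
  pose proof (share_regret_le_log_ratios d eta alpha l q T Hd Heta Halpha Hl Hq) as Hregret.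
  pose proof (log_ratio_total_bound d eta alpha l q T Hd Halpha HT Hq) as Hlog.
  rewrite minus_INR in Hlog by exact HT. simpl INR in Hlog.
  apply Rmult_le_compat_l with (r := / eta) in Hlog; [|left; apply Rinv_0_lt_compat, Heta].
  eapply Rle_trans; [exact Hregret|].
  eapply Rle_trans; [apply Rplus_le_compat_r, Hlog|].
  apply Req_le. field. lra.
Qed.
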